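(* Let $n\ge 1$ be an integer, $0<\epsilon\le 1$, $0<\tau<1$, and let $G=(V,E)$ be a comparison graph. Suppose that (1) $|E|\ge \dfrac{4n}{\tau^2\epsilon^4}$, (2) $|E|\ge \dfrac{16n}{(1-\tau)^2\epsilon^4}$, and (3) $\dfrac{c(G)}{|E|^2}\le \dfrac{(1-\tau)^2\epsilon^2}{16\sqrt n}$. Then the collision-based algorithm $(G,\tau)$ is an $\epsilon$-uniformity tester for domain $[n]$.
   Context: Notation: $[n]=\{1,\dots,n\}$; $\Delta([n])$ is the set of probability distributions on $[n]$; $P_i$ is the probability of $i$ under $P$; $U_n$ is the uniform distribution on $[n]$; $\|P-Q\|=\sum_{i=1}^n|P_i-Q_i|$ ($\ell_1$ distance). A comparison graph is a finite simple undirected graph $G=(V,E)$. Given $P\in\Delta([n])$, each vertex $v\in V$ is assigned an independent sample $S(v)\sim P$; for an edge $e=\{u,v\}\in E$ the collision indicator is $\mathbf 1_e=\mathbf 1[S(u)=S(v)]$. For $\tau\in[0,1]$, the collision-based algorithm $(G,\tau)$ computes $Z=\sum_{e\in E}\mathbf 1_e$ and $T=|E|\cdot\frac{1+\tau\epsilon^2}{n}$, and outputs YES if $Z<T$ and NO otherwise. It is an $\epsilon$-uniformity tester (for domain $[n]$) if, when $P=U_n$, it outputs YES with probability at least $3/4$, and for every $P\in\Delta([n])$ with $\|P-U_n\|\ge\epsilon$ it outputs NO with probability at least $3/4$. $c(G)$ denotes the number of ordered triples $(u,v,w)$ of distinct vertices with $\{u,v\}\in E$ and $\{v,w\}\in E$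 (equivalently $c(G)=\sum_{v\in V}d_v(d_v-1)$, $d_v$ the degree of $v$). *)

From HB Require Import structures.
From mathcomp Require Import all_boot all_order all_algebra.
From mathcomp Require Import reals.
Import Order.TTheory GRing.Theory Num.Theory.
Local Open Scope ring_scope.

Section Defs.
Variable R : realType.

Definition is_distr (n : nat) (P : 'I_n -> R) : Prop :=
  (forall i, 0 <= P i) /\ \sum_(i < n) P i = 1.

Definition unif (n : nat) : 'I_n -> R := fun _ => n%:R^-1.

Definition l1dist (n : nat) (P Q : 'I_n -> R) : R :=
  \sum_(i < n) `|P i - Q i|.

Variable V : finType.

(* edge set of the simple graph given by a symmetric irreflexive relation e *)
Definition edges (e : rel V) : {set {set V}} :=
  [set [set p.1; p.2] | p in [set p : V * V | e p.1 p.2]].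

Definition cG (e : rel V) : nat :=
  #|[set t : V * V * V |
      [&& t.1.1 != t.1.2, t.1.2 != t.2, t.1.1 != t.2,
          e t.1.1 t.1.2 & e t.1.2 t.2]]|.

Definition collisions (n : nat) (e : rel V) (S : {ffun V -> 'I_n}) : nat :=
  #|[set f in edges e | [forall u in f, forall v in f, S u == S v]]|.

(* probability, under i.i.d. samples S(v) ~ P, of an event on the samples *)
Definition prob (n : nat) (P : 'I_n -> R) (A : pred {ffun V -> 'I_n}) : R :=
  \sum_(S : {ffun V -> 'I_n} | A S) \prod_(v : V) P (S v).

Definition threshold (n : nat) (e : rel V) (tau eps : R) : R :=
  #|edges e|%:R * (1 + tau * eps ^+ 2) / n%:R.

Definition outputs_yes (n : nat) (e : rel V) (tau eps : R)
    (S : {ffun V -> 'I_n}) : bool :=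
  (collisions n e S)%:R < threshold n e tau eps.

Definition is_uniformity_tester (n : nat) (e : rel V) (tau eps : R) : Prop :=
  prob n (unif n) (fun S => outputs_yes n e tau eps S) >= 3 / 4 /\
  forall P : 'I_n -> R, is_distr n P -> l1dist n P (unif n) >= eps ->
    prob n P (fun S => ~~ outputs_yes n e tau eps S) >= 3 / 4.
End Defs.
Arguments is_uniformity_tester {R V} n e tau eps.

From HB Require Import structures.
From mathcomp Require Import all_boot all_order all_algebra.
From mathcomp Require Import reals.
From mathcomp Require Import ring lra zify.
Import Order.TTheory GRing.Theory Num.Theory.
Local Open Scope ring_scope.

(* Write m = |E|, p_j = sum_i P_i^j, and let X_f indicate that the two endpoints
   of the edge f receive the same sample, so that Z = sum_(f in E) X_f.  For two
   edges f and g, E[X_f X_g] is p_2 if f = g, p_3 if f and g share one vertex, and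
   p_2^2 if they are disjoint (independence).  Hence E[Z] = m p_2 and
        Var Z = m (p_2 - p_2^2) + N (p_3 - p_2^2),
   where N <= c(G) counts ordered pairs of distinct edges sharing a vertex.
   - For P = U_n, p_2 = 1/n and p_3 = p_2^2, so Var Z <= m/n; Chebyshev's
     inequality for the deviation m tau eps^2 / n and condition (1) bound the
     probability of answering NO by 1/4.
   - If |P - U_n| >= eps, the excess d = p_2 - 1/n satisfies eps^2 <= n d
     (Cauchy-Schwarz) and p_3 - p_2^2 <= (1/n + sqrt d) d (third moment).  Then
     E[Z] - T >= m (1 - tau) d, and conditions (2) and (3) bound the probability
     of answering YES by 1/4 through Chebyshev's inequality. *)

Section ProductExpectation.
Context {R : realType} {n : nat} {V : finType} {P : 'I_n -> R}.
Local Notation sample := {ffun V -> 'I_n}.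

Definition weight (S : sample) : R := \prod_v P (S v).

Definition expect (F : sample -> R) : R := \sum_S weight S * F S.

Lemma eq_expect {F G : sample -> R} : F =1 G -> expect F = expect G.
Proof. by move=> FG; apply: eq_bigr => S _; rewrite FG. Qed.

Lemma expect_sum (I : finType) (A : pred I) (F : I -> sample -> R) :
  expect (fun S => \sum_(i in A) F i S) = \sum_(i in A) expect (F i).
Proof. by rewrite /expect exchange_big; apply: eq_bigr => S _; rewrite mulr_sumr. Qed.

Lemma expect_product_event (a : V -> pred 'I_n) :
  expect (fun S => [forall v, a v (S v)]%:R) = \prod_v \sum_(x | a v x) P x.
Proof.
have -> : \prod_v \sum_(x | a v x) P x = \prod_v \sum_x P x * (a v x)%:R.
  apply: eq_bigr => v _; rewrite big_mkcond; apply: eq_bigr => x _.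
  by case: (a v x); rewrite ?mulr1 ?mulr0.
rewrite bigA_distr_bigA; apply: eq_bigr => S _.
rewrite /weight big_split /=; congr (_ * _).
case: (boolP [forall v, a v (S v)]) => [/forallP all_a | /forallPn [v not_a]].
  by rewrite big1 // => v _; rewrite all_a.
by rewrite (bigD1 v) //= (negbTE not_a) mul0r.
Qed.

Lemma probE (A : pred sample) : prob R V n P A = expect (fun S => (A S)%:R).
Proof.
rewrite /prob /expect big_mkcond; apply: eq_bigr => S _.
by case: (A S); rewrite ?mulr1 ?mulr0.
Qed.

Hypothesis P_sum1 : \sum_i P i = 1.

Lemma sum_weight : \sum_S weight S = 1.
Proof.
have := expect_product_event (fun _ _ => true).
rewrite big1 => [|v _]; last by rewrite P_sum1.
move=> <-; apply: eq_bigr => S _.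
by rewrite (_ : [forall v, true]) ?mulr1 //; apply/forallP.
Qed.

Lemma expect_const (c : R) : expect (fun _ => c) = c.
Proof. by rewrite /expect -mulr_suml sum_weight mul1r. Qed.

Lemma expect_pattern (A : {set V}) (c : V -> 'I_n) :
  expect (fun S => [forall v in A, S v == c v]%:R) = \prod_(v in A) P (c v).
Proof.
rewrite (expect_product_event (fun v x => (v \in A) ==> (x == c v))).
rewrite [RHS]big_mkcond; apply: eq_bigr => v _.
case: (v \in A) => /=; last by rewrite P_sum1.
by rewrite (big_pred1 (c v)).
Qed.

Lemma expect_sq_dev (Z : sample -> R) :
  expect (fun S => (Z S - expect Z) ^+ 2) = expect (fun S => Z S ^+ 2) - expect Z ^+ 2.
Proof.
set mu := expect Z.
rewrite /expect (eq_bigr (fun S => weight S * Z S ^+ 2 - 2 * mu * (weight S * Z S)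
                                   + mu ^+ 2 * weight S)); last by move=> S _; ring.
by rewrite big_split sumrB /= -!mulr_sumr sum_weight; rewrite /mu /expect; ring.
Qed.

Lemma prob_compl (A : pred sample) :
  prob R V n P A + prob R V n P (fun S => ~~ A S) = 1.
Proof.
rewrite !probE /expect -big_split /= -[RHS](expect_const 1); apply: eq_bigr => S _.
by case: (A S); rewrite /= ?mulr1 ?mulr0 ?addr0 ?add0r.
Qed.

Hypothesis P_ge0 : forall i, 0 <= P i.

Lemma weight_ge0 (S : sample) : 0 <= weight S.
Proof. by apply: prodr_ge0 => v _. Qed.

Lemma chebyshev {Z : sample -> R} {mu t : R} {A : pred sample} :
  0 <= t -> (forall S, A S -> t <= `|Z S - mu|) ->
  t ^+ 2 * prob R V n P A <= expect (fun S => (Z S - mu) ^+ 2).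
Proof.
move=> t_ge0 far; rewrite /prob /expect mulr_sumr [X in _ <= X](bigID A) /=.
rewrite -[X in X <= _]addr0; apply: lerD; last first.
  by apply: sumr_ge0 => S _; rewrite mulr_ge0 ?sqr_ge0 ?weight_ge0.
apply: ler_sum => S AS; rewrite mulrC ler_wpM2l ?weight_ge0 //.
by rewrite -[(Z S - mu) ^+ 2]real_normK ?num_real // lerXn2r ?nnegrE ?far.
Qed.

Lemma rare_deviation (Z : sample -> R) (mu t : R) (A : pred sample) :
  0 < t -> (forall S, A S -> t <= `|Z S - mu|) ->
  expect (fun S => (Z S - mu) ^+ 2) <= t ^+ 2 / 4 -> prob R V n P A <= 1 / 4.
Proof.
move=> t_gt0 far var_small; have t2_gt0 : 0 < t ^+ 2 by rewrite exprn_gt0.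
have cheb := le_trans (chebyshev (ltW t_gt0) far) var_small.
by rewrite -(ler_pM2l t2_gt0) mul1r.
Qed.
End ProductExpectation.
Arguments weight {R n V} P S.
Arguments expect {R n V} P F.

(* The j-th power sum of P; p_2 is the collision probability of two samples. *)
Definition power_sum {R : realType} {n : nat} (P : 'I_n -> R) (j : nat) : R :=
  \sum_i P i ^+ j.

Section Monochromatic.
Context {R : realType} {n : nat} {V : finType} {P : 'I_n -> R}.
Hypothesis P_sum1 : \sum_i P i = 1.
Local Notation sample := {ffun V -> 'I_n}.

Definition monochromatic (S : sample) (f : {set V}) : bool :=
  [forall u in f, forall v in f, S u == S v].

Lemma monochromaticE (S : sample) {f : {set V}} {a : V} : a \in f ->
  monochromatic S f = [forall v in f, S v == S a].
Proof.
move=> af; apply/idP/idP => /forall_inP mono.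
  by apply/forall_inP => v vf; exact: (forall_inP (mono v vf) a af).
apply/forall_inP => u uf; apply/forall_inP => v vf.
by rewrite (eqP (mono u uf)) (eqP (mono v vf)).
Qed.

Lemma monochromatic_sum (S : sample) {f : {set V}} : f != set0 ->
  (monochromatic S f)%:R = \sum_k ([forall v in f, S v == k])%:R :> R.
Proof.
case/set0Pn => a af; rewrite (monochromaticE S af) (bigD1 (S a)) //= big1 ?addr0 //.
move=> k k_neq; case: forall_inP => // all_k.
by move: k_neq; rewrite (eqP (all_k a af)) eqxx.
Qed.

Lemma expect_monochromatic (f : {set V}) : f != set0 ->
  expect P (fun S => (monochromatic S f)%:R) = power_sum P #|f|.
Proof.
move=> f_n0; rewrite (eq_expect (fun S => monochromatic_sum S f_n0)).
rewrite expect_sum; apply: eq_bigr => k _.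
by rewrite expect_pattern // prodr_const.
Qed.

Lemma monochromaticU (S : sample) (f g : {set V}) : f :&: g != set0 ->
  monochromatic S f && monochromatic S g = monochromatic S (f :|: g).
Proof.
case/set0Pn => x; rewrite inE => /andP [xf xg].
rewrite (monochromaticE S xf) (monochromaticE S xg) (monochromaticE S (a := x)) ?inE ?xf //.
apply/andP/forall_inP => [[/forall_inP mf /forall_inP mg] v | mfg].
  by case/setUP; [exact: mf | exact: mg].
by split; apply/forall_inP => v vfg; apply: mfg; rewrite inE vfg ?orbT.
Qed.

Lemma expect_monochromatic_disjoint (f g : {set V}) :
  f != set0 -> g != set0 -> [disjoint f & g] ->
  expect P (fun S => (monochromatic S f)%:R * (monochromatic S g)%:R)
  = power_sum P #|f| * power_sum P #|g|.
Proof.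
move=> f_n0 g_n0 fg_dis.
pose colour (k l : 'I_n) (v : V) := if v \in f then k else l.
have split_pair S : (monochromatic S f)%:R * (monochromatic S g)%:R
    = \sum_k \sum_l ([forall v in f :|: g, S v == colour k l v])%:R :> R.
  rewrite !monochromatic_sum // mulr_suml; apply: eq_bigr => k _.
  rewrite mulr_sumr; apply: eq_bigr => l _; rewrite -natrM mulnb; congr (nat_of_bool _)%:R.
  apply/andP/forall_inP => [[/forall_inP cf /forall_inP cg] v | cfg].
    rewrite /colour; case/setUP => [vf | vg]; first by rewrite vf cf.
    by rewrite (disjointFl fg_dis vg) cg.
  split; apply/forall_inP => v vfg; have := cfg v; rewrite inE vfg ?orbT /colour => /(_ isT).
    by rewrite vfg.
  by rewrite (disjointFl fg_dis vfg).
rewrite (eq_expect split_pair) expect_sum /power_sum mulr_suml; apply: eq_bigr => k _.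
rewrite expect_sum mulr_sumr; apply: eq_bigr => l _.
rewrite expect_pattern // (eq_bigl [predU f & g]) => [|v]; last by rewrite !inE.
rewrite bigU // -!prodr_const; congr (_ * _); apply: eq_bigr => v vx; rewrite /colour.
  by rewrite vx.
by rewrite (disjointFl fg_dis vx).
Qed.
End Monochromatic.

Section ComparisonGraph.
Context {V : finType} {e : rel V}.
Hypotheses (e_sym : symmetric e) (e_irr : irreflexive e).
Local Notation E := (edges V e).

Lemma edge_card {f : {set V}} : f \in E -> #|f| = 2%N.
Proof.
case/imsetP => [[u v]]; rewrite inE /= => euv ->.
by rewrite cards2; case: eqVneq euv => [->|//]; rewrite e_irr.
Qed.

Lemma edge_through {f : {set V}} {x : V} :
  f \in E -> x \in f -> exists2 u, e u x & f = [set u; x].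
Proof.
case/imsetP => [[u v]]; rewrite inE /= => euv -> /set2P [->|->].
  by exists v; [rewrite e_sym | rewrite setUC].
by exists u.
Qed.

Lemma adjacent_edges_cardU {f g : {set V}} :
  f \in E -> g \in E -> f != g -> f :&: g != set0 -> #|f :|: g| = 3%N.
Proof.
move=> fE gE fg fg_meet.
have meet_gt0 : (0 < #|f :&: g|)%N by rewrite card_gt0.
have meet_le2 : (#|f :&: g| <= 2)%N.
  by rewrite -(edge_card fE) subset_leq_card // subsetIl.
have meet_neq2 : #|f :&: g| != 2%N.
  apply: contraNneq fg => meet2.
  have fI : f :&: g = f by apply/eqP; rewrite eqEcard subsetIl meet2 (edge_card fE).
  have gI : f :&: g = g by apply/eqP; rewrite eqEcard subsetIr meet2 (edge_card gE).
  by rewrite -fI gI.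
rewrite cardsU (edge_card fE) (edge_card gE); lia.
Qed.

Definition adjacent_pairs : {set {set V} * {set V}} :=
  [set p | [&& p.1 \in E, p.2 \in E, p.1 != p.2 & p.1 :&: p.2 != set0]].

(* Every adjacent pair (uv, vw) comes from a path u-v-w counted by c(G). *)
Lemma adjacent_pairs_le_cG : (#|adjacent_pairs| <= cG V e)%N.
Proof.
pose edge_pair (t : V * V * V) := ([set t.1.1; t.1.2], [set t.1.2; t.2]).
apply: leq_trans (leq_imset_card edge_pair _); apply/subset_leq_card/subsetP.
move=> [f g]; rewrite inE /= => /and4P [fE gE fg /set0Pn [x]].
rewrite inE => /andP [xf xg].
have [u eux fu] := edge_through fE xf; have [w ewx gw] := edge_through gE xg.
apply/imsetP; exists (u, x, w); last by rewrite /edge_pair /= fu gw (setUC [set w]).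
have ux : u != x by apply: contraTneq eux => ->; rewrite e_irr.
have xw : x != w by apply: contraTneq ewx => ->; rewrite e_irr.
have uw : u != w by apply: contraNneq fg => uw; rewrite fu gw uw.
by rewrite inE /= ux xw uw eux e_sym ewx.
Qed.
End ComparisonGraph.
Arguments adjacent_pairs {V} e.

Section CollisionMoments.
Context {R : realType} {n : nat} {V : finType} {P : 'I_n -> R} (e : rel V).
Hypotheses (P_sum1 : \sum_i P i = 1) (e_irr : irreflexive e).
Local Notation E := (edges V e).
Local Notation m := (#|E|%:R : R).
Local Notation p2 := (power_sum P 2).
Local Notation p3 := (power_sum P 3).

Lemma collisionsE (S : {ffun V -> 'I_n}) :
  (collisions V n e S)%:R = \sum_(f in E) (monochromatic S f)%:R :> R.
Proof.
rewrite /collisions -sum1_card natr_sum big_mkcond [RHS]big_mkcond /=.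
by apply: eq_bigr => f _; rewrite inE /monochromatic; case: (f \in E); case: [forall u in f, _].
Qed.

Lemma expect_edge_pair (f g : {set V}) : f \in E -> g \in E ->
  expect P (fun S => (monochromatic S f)%:R * (monochromatic S g)%:R)
  = p2 ^+ 2 + (f == g)%:R * (p2 - p2 ^+ 2)
    + ((f, g) \in adjacent_pairs e)%:R * (p3 - p2 ^+ 2).
Proof.
move=> fE gE; rewrite inE /= fE gE /=.
have f_n0 : f != set0 by rewrite -card_gt0 (edge_card e_irr fE).
have g_n0 : g != set0 by rewrite -card_gt0 (edge_card e_irr gE).
case: (eqVneq f g) => [<- | fg] /=.
  have self (S : {ffun V -> 'I_n}) : (monochromatic S f)%:R * (monochromatic S f)%:R
      = (monochromatic S f)%:R :> R by rewrite -natrM mulnb andbb.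
  by rewrite (eq_expect self) expect_monochromatic // (edge_card e_irr fE); ring.
case: (boolP (f :&: g != set0)) => [fg_meet | /negPn]; last first.
  rewrite setI_eq0 => fg_dis.
  rewrite expect_monochromatic_disjoint // (edge_card e_irr fE) (edge_card e_irr gE).
  by rewrite /=; ring.
have joint (S : {ffun V -> 'I_n}) : (monochromatic S f)%:R * (monochromatic S g)%:R
    = (monochromatic S (f :|: g))%:R :> R.
  by rewrite -natrM mulnb monochromaticU.
rewrite (eq_expect joint) expect_monochromatic ?(adjacent_edges_cardU e_irr) //.
  by rewrite /=; ring.
by rewrite -card_gt0 (adjacent_edges_cardU e_irr fE gE fg fg_meet).
Qed.

Lemma expect_collisions :
  expect P (fun S => (collisions V n e S)%:R) = m * p2.
Proof.
rewrite (eq_expect collisionsE) expect_sum (eq_bigr (fun _ => p2)) => [|f fE].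
  by rewrite sumr_const mulr_natl.
by rewrite expect_monochromatic ?(edge_card e_irr fE) // -card_gt0 (edge_card e_irr fE).
Qed.

Lemma sum_edge_pairs (c x y : R) :
  \sum_(f in E) \sum_(g in E)
     (c + (f == g)%:R * x + ((f, g) \in adjacent_pairs e)%:R * y)
  = m * m * c + m * x + #|adjacent_pairs e|%:R * y.
Proof.
have diag f : f \in E -> \sum_(g in E) (f == g)%:R * x = x.
  move=> fE; rewrite (bigD1 f) //= eqxx mul1r big1 ?addr0 // => g /andP [_ gf].
  by rewrite eq_sym (negbTE gf) mul0r.
have adj_count : \sum_(f in E) \sum_(g in E) ((f, g) \in adjacent_pairs e)%:R
                 = #|adjacent_pairs e|%:R :> R.
  rewrite pair_big_dep -sum1_card natr_sum big_mkcond [RHS]big_mkcond /=.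
  apply: eq_bigr => -[f g] _ /=; case: (boolP (_ \in adjacent_pairs e)) => [|_].
    by rewrite inE /= => /and4P [-> -> _ _].
  by case: (_ && _).
have adj : \sum_(f in E) \sum_(g in E) ((f, g) \in adjacent_pairs e)%:R * y
           = #|adjacent_pairs e|%:R * y.
  by rewrite -adj_count mulr_suml; apply: eq_bigr => f _; rewrite mulr_suml.
under eq_bigr do rewrite !big_split /=.
rewrite !big_split /= (eq_bigr _ diag) adj !sumr_const.
by ring.
Qed.

Lemma variance_collisions :
  expect P (fun S => ((collisions V n e S)%:R - m * p2) ^+ 2)
  = m * (p2 - p2 ^+ 2) + #|adjacent_pairs e|%:R * (p3 - p2 ^+ 2).
Proof.
have second_moment : expect P (fun S => (collisions V n e S)%:R ^+ 2)
    = \sum_(f in E) \sum_(g in E)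
        expect P (fun S => (monochromatic S f)%:R * (monochromatic S g)%:R).
  transitivity (expect P (fun S => \sum_(f in E) \sum_(g in E)
                   (monochromatic S f)%:R * (monochromatic S g)%:R)).
    apply: eq_expect => S; rewrite collisionsE expr2 mulr_suml.
    by apply: eq_bigr => f _; rewrite mulr_sumr.
  by rewrite expect_sum; apply: eq_bigr => f _; rewrite expect_sum.
rewrite -expect_collisions expect_sq_dev // second_moment expect_collisions.
under eq_bigr => f fE do under eq_bigr => g gE do rewrite expect_edge_pair //.
by rewrite sum_edge_pairs; ring.
Qed.
End CollisionMoments.

Lemma sqr_l1_le {R : realDomainType} {n : nat} (x : 'I_n -> R) :
  (\sum_i `|x i|) ^+ 2 <= n%:R * \sum_i x i ^+ 2.
Proof.
set s := \sum_i `|x i|; set q := \sum_i x i ^+ 2.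
have spread : \sum_i \sum_j (`|x i| - `|x j|) ^+ 2 = n%:R * q *+ 2 - s ^+ 2 *+ 2.
  transitivity (\sum_i \sum_j (x i ^+ 2 + x j ^+ 2 - `|x i| * `|x j| *+ 2)).
    apply: eq_bigr => i _; apply: eq_bigr => j _.
    by rewrite -[x i ^+ 2]real_normK -?[x j ^+ 2]real_normK ?num_real //; ring.
  under eq_bigr do rewrite sumrB big_split /= sumr_const card_ord sumrMnl -mulr_sumr.
  rewrite sumrB big_split /= sumr_const card_ord !sumrMnl -mulr_suml.
  by rewrite /q /s; ring.
have : 0 <= \sum_i \sum_j (`|x i| - `|x j|) ^+ 2.
  by apply: sumr_ge0 => i _; apply: sumr_ge0 => j _; apply: sqr_ge0.
by rewrite spread subr_ge0 lerMn2r.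
Qed.

Section DistanceToUniform.
Context {R : realType} {n : nat} (P : 'I_n -> R).
Hypotheses (n_gt0 : (0 < n)%N) (P_distr : is_distr R n P).
Local Notation u := (n%:R^-1 : R).

Let n_u : n%:R * u = 1.
Proof. by rewrite mulfV // pnatr_eq0 -lt0n. Qed.

Let sum_const (x : R) : \sum_(i < n) x = n%:R * x.
Proof. by rewrite sumr_const card_ord mulr_natl. Qed.

Definition collision_excess : R := power_sum P 2 - u.
Local Notation d := collision_excess.

Let dev (i : 'I_n) : R := P i - u.

Let sum_dev : \sum_i dev i = 0.
Proof. by rewrite sumrB P_distr.2 sum_const n_u subrr. Qed.

Let sum_dev2 : \sum_i dev i ^+ 2 = d.
Proof.
transitivity (\sum_i (P i ^+ 2 - u * dev i *+ 2 - u ^+ 2)).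
  by apply: eq_bigr => i _; rewrite /dev; ring.
rewrite !sumrB sumrMnl -mulr_sumr sum_dev sum_const.
by rewrite /d /power_sum expr2 mulrA n_u; ring.
Qed.

(* d is the sum of the squared deviations P_i - 1/n, hence nonnegative. *)
Lemma collision_excess_ge0 : 0 <= d.
Proof. by rewrite -sum_dev2 sumr_ge0 // => i _; apply: sqr_ge0. Qed.

(* Cauchy-Schwarz: an l1 distance eps to uniform forces an excess eps^2 / n. *)
Lemma collision_excess_lower (eps : R) :
  0 <= eps -> eps <= l1dist R n P (unif R n) -> eps ^+ 2 <= n%:R * d.
Proof.
move=> eps_ge0 far; rewrite -sum_dev2; apply: le_trans (sqr_l1_le _).
by rewrite lerXn2r ?nnegrE ?sumr_ge0.
Qed.

Lemma third_moment_bound :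
  power_sum P 3 - power_sum P 2 ^+ 2 <= (u + Num.sqrt d) * d.
Proof.
have dev_le i : `|dev i| <= Num.sqrt d.
  rewrite -sqrtr_sqr ler_sqrt ?collision_excess_ge0 // -sum_dev2.
  by rewrite (bigD1 i) //= lerDl sumr_ge0 // => j _; apply: sqr_ge0.
have sum_dev3 : \sum_i dev i ^+ 3 <= Num.sqrt d * d.
  rewrite -[X in _ * X]sum_dev2 mulr_sumr; apply: ler_sum => i _.
  rewrite exprS ler_wpM2r ?sqr_ge0 //.
  exact: le_trans (real_ler_norm (num_real _)) (dev_le i).
have p3E : power_sum P 3 = \sum_i dev i ^+ 3 + u * d *+ 3 + u ^+ 2.
  transitivity (\sum_i (dev i ^+ 3 + u * dev i ^+ 2 *+ 3 + u ^+ 2 * dev i *+ 3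
                        + u ^+ 3)).
    by apply: eq_bigr => i _; rewrite /dev; ring.
  by rewrite !big_split /= -!mulr_sumr sum_dev2 sum_dev sum_const n_u; ring.
have p2E : power_sum P 2 = u + d by rewrite /d; ring.
rewrite p3E p2E; have := sqr_ge0 d; nra.
Qed.
End DistanceToUniform.

Lemma unif_distr (R : realType) {n : nat} : (0 < n)%N -> is_distr R n (unif R n).
Proof.
move=> n_gt0; split=> [i|]; first by rewrite invr_ge0 ler0n.
by rewrite /unif sumr_const card_ord -[_^-1 *+ n]mulr_natl mulfV // pnatr_eq0 -lt0n.
Qed.

Lemma power_sum_unif (R : realType) (n : nat) (j : nat) : (0 < n)%N ->
  power_sum (unif R n) j.+1 = n%:R^-1 ^+ j.
Proof.
move=> n_gt0; rewrite /power_sum /unif sumr_const card_ord -[_ *+ n]mulr_natl exprS mulrA.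
by rewrite mulfV ?mul1r // pnatr_eq0 -lt0n.
Qed.

Section ExcessArithmetic.
Context {R : realType} {n : nat} {eps d : R}.
Hypotheses (n_gt0 : (0 < n)%N) (eps_gt0 : 0 < eps) (eps_le1 : eps <= 1).
Hypotheses (d_ge0 : 0 <= d) (excess_lower : eps ^+ 2 <= n%:R * d).
Local Notation u := (n%:R^-1 : R).

Let n_u : n%:R * u = 1.
Proof. by rewrite mulfV // pnatr_eq0 -lt0n. Qed.

Lemma excess_gt0 : 0 < d.
Proof.
have n_pos : (0 : R) < n%:R by rewrite ltr0n.
by rewrite -(pmulr_rgt0 _ n_pos); apply: lt_le_trans excess_lower; rewrite exprn_gt0.
Qed.

Lemma excess_inv_lower : eps ^+ 2 * u <= d.
Proof.
have u_ge0 : 0 <= u by rewrite invr_ge0 ler0n.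
by have := ler_wpM2r u_ge0 excess_lower; rewrite [n%:R * d * u]mulrAC n_u mul1r.
Qed.

(* The two ratios controlling the variance bound in the far case. *)
Lemma excess_ratio_linear : eps ^+ 2 * (u + d) <= 2 * d.
Proof.
have eps2_le1 : eps ^+ 2 <= 1 by rewrite exprn_ile1 // ltW.
have eps2_d : eps ^+ 2 * d <= d by rewrite ler_piMl ?d_ge0.
by rewrite mulrDr; have := excess_inv_lower; lra.
Qed.

Lemma excess_ratio_sqrt : eps ^+ 2 * (u + Num.sqrt d) <= 2 * Num.sqrt (n%:R : R) * d.
Proof.
have sqrt_n_ge1 : 1 <= Num.sqrt (n%:R : R).
  by rewrite -[X in X <= _](sqrtr1 R) ler_sqrt ?ler0n // ler1n.
have sqrt_d : Num.sqrt d ^+ 2 = d by rewrite sqr_sqrtr ?d_ge0.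
have eps_le : eps <= Num.sqrt (n%:R : R) * Num.sqrt d.
  rewrite -sqrtrM ?ler0n // -(ger0_norm (ltW eps_gt0)) -sqrtr_sqr ler_sqrt //.
  by rewrite mulr_ge0 ?ler0n ?d_ge0.
have eps2_le : eps ^+ 2 <= Num.sqrt (n%:R : R) * Num.sqrt d.
  apply: (@le_trans _ _ (eps * (Num.sqrt (n%:R : R) * Num.sqrt d))).
    by rewrite expr2 ler_wpM2l // ltW.
  by rewrite ler_piMl // mulr_ge0 ?sqrtr_ge0.
have linear_term : eps ^+ 2 * u <= Num.sqrt (n%:R : R) * d.
  by apply: le_trans excess_inv_lower _; rewrite ler_peMl ?d_ge0.
have sqrt_term : eps ^+ 2 * Num.sqrt d <= Num.sqrt (n%:R : R) * d.
  by rewrite -[X in _ <= _ * X]sqrt_d [Num.sqrt d ^+ 2]expr2 mulrA ler_wpM2r ?sqrtr_ge0.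
by rewrite mulrDr; lra.
Qed.

Lemma far_variance_le {m c tau : R} : 0 <= m -> 0 <= c ->
  16 * n%:R <= m * ((1 - tau) ^+ 2 * eps ^+ 4) ->
  c * (16 * Num.sqrt (n%:R : R)) <= (1 - tau) ^+ 2 * eps ^+ 2 * m ^+ 2 ->
  m * (u + d) + c * ((u + Num.sqrt d) * d) <= (m * (1 - tau) * d) ^+ 2 / 4.
Proof.
move=> m_ge0 c_ge0 enough_edges few_paths.
have K_ge0 : 0 <= (1 - tau) ^+ 2 by apply: sqr_ge0.
have n_pos : (0 : R) < n%:R by rewrite ltr0n.
have eps2_gt0 : 0 < eps ^+ 2 by rewrite exprn_gt0.
have gap_large : 16 <= m * (1 - tau) ^+ 2 * eps ^+ 2 * d.
  rewrite -(ler_pM2l n_pos) mulrC.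
  have := ler_wpM2l (mulr_ge0 (mulr_ge0 m_ge0 K_ge0) (ltW eps2_gt0)) excess_lower.
  lra.
have linear_part := ler_wpM2l m_ge0 excess_ratio_linear.
have sqrt_part := ler_wpM2l (mulr_ge0 c_ge0 d_ge0) excess_ratio_sqrt.
have edges_part := ler_wpM2l (mulr_ge0 m_ge0 d_ge0) gap_large.
have paths_part := ler_wpM2r (sqr_ge0 d) few_paths.
by rewrite -(ler_pM2l eps2_gt0); lra.
Qed.
End ExcessArithmetic.

Section CollisionTester.
Context {R : realType} {n : nat} {V : finType} (e : rel V) (eps tau : R).
Hypotheses (n_gt0 : (0 < n)%N) (eps_gt0 : 0 < eps) (eps_le1 : eps <= 1).
Hypotheses (tau_gt0 : 0 < tau) (tau_lt1 : tau < 1).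
Hypotheses (e_sym : symmetric e) (e_irr : irreflexive e).
Local Notation m := (#|edges V e|%:R : R).
Hypothesis m_gt0 : 0 < m.
Local Notation u := (n%:R^-1 : R).
Local Notation yes := (outputs_yes R V n e tau eps).

Let n_pos : (0 : R) < n%:R.
Proof. by rewrite ltr0n. Qed.

Let n_u : n%:R * u = 1.
Proof. by rewrite mulfV // gt_eqF. Qed.

Lemma uniform_accepted : 4 * n%:R <= m * (tau ^+ 2 * eps ^+ 4) ->
  3 / 4 <= prob R V n (unif R n) yes.
Proof.
move=> enough_edges; have [unif_ge0 unif_sum1] := unif_distr R n_gt0.
have p2 : power_sum (unif R n) 2 = u by rewrite power_sum_unif // expr1.
have p3 : power_sum (unif R n) 3 = u ^+ 2 by rewrite power_sum_unif.
set t := m * (tau * eps ^+ 2) * u.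
have t_gt0 : 0 < t by rewrite !mulr_gt0 ?exprn_gt0 ?invr_gt0.
have rejection_rare : prob R V n (unif R n) (fun S => ~~ yes S) <= 1 / 4.
  apply: (rare_deviation unif_ge0 (fun S => (collisions V n e S)%:R) (m * u) t _ t_gt0).
    move=> S; rewrite /outputs_yes /threshold -leNgt => above.
    by apply: le_trans (ler_norm _); rewrite /t; lra.
  rewrite -p2 variance_collisions // p2 p3 subrr mulr0 addr0.
  have := ler_wpM2r (mulr_ge0 (ltW m_gt0) (sqr_ge0 u)) enough_edges.
  have := mulr_ge0 (ltW m_gt0) (sqr_ge0 u).
  have m_u : m * (n%:R * u ^+ 2) = m * u by rewrite expr2 [n%:R * _]mulrA n_u mul1r.
  by rewrite /t; nra.
by have := prob_compl unif_sum1 yes; lra.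
Qed.

Lemma far_rejected (P : 'I_n -> R) :
  is_distr R n P -> eps <= l1dist R n P (unif R n) ->
  16 * n%:R <= m * ((1 - tau) ^+ 2 * eps ^+ 4) ->
  (cG V e)%:R * (16 * Num.sqrt (n%:R : R)) <= (1 - tau) ^+ 2 * eps ^+ 2 * m ^+ 2 ->
  3 / 4 <= prob R V n P (fun S => ~~ yes S).
Proof.
move=> P_distr far enough_edges few_paths; have [P_ge0 P_sum1] := P_distr.
set d := collision_excess P.
have excess_lower := collision_excess_lower P n_gt0 P_distr _ (ltW eps_gt0) far.
have d_ge0 : 0 <= d := collision_excess_ge0 P n_gt0 P_distr.
have d_gt0 := excess_gt0 n_gt0 eps_gt0 excess_lower.
have p2 : power_sum P 2 = u + d by rewrite /d /collision_excess; ring.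
set t := m * (1 - tau) * d.
have t_gt0 : 0 < t by rewrite !mulr_gt0 // subr_gt0.
have acceptance_rare : prob R V n P yes <= 1 / 4.
  apply: (rare_deviation P_ge0 (fun S => (collisions V n e S)%:R)
            (m * power_sum P 2) t _ t_gt0).
    move=> S; rewrite /outputs_yes /threshold p2 => below.
    have gap : m * (tau * eps ^+ 2 * u) <= m * (tau * d).
      rewrite ler_pM2l // -mulrA ler_pM2l //.
      exact: excess_inv_lower n_gt0 excess_lower.
    by rewrite -normrN; apply: le_trans (ler_norm _); rewrite /t; lra.
  rewrite variance_collisions //; apply: le_trans (far_variance_le n_gt0 eps_gt0
    eps_le1 d_ge0 excess_lower (ltW m_gt0) (ler0n _ _) enough_edges few_paths).
  rewrite p2; apply: lerD; first by rewrite ler_pM2l // gerBl sqr_ge0.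
  have moment3 := third_moment_bound P n_gt0 P_distr.
  have paths := adjacent_pairs_le_cG e_sym e_irr; rewrite -(ler_nat R) in paths.
  apply: le_trans (_ : #|adjacent_pairs e|%:R * ((u + Num.sqrt d) * d) <= _).
    by rewrite ler_wpM2l ?ler0n // -p2.
  have B_ge0 : 0 <= (u + Num.sqrt d) * d.
    by rewrite mulr_ge0 // addr_ge0 ?sqrtr_ge0 // invr_ge0 ler0n.
  by rewrite ler_wpM2r.
by have := prob_compl P_sum1 yes; lra.
Qed.
End CollisionTester.

Theorem theorem1 (R : realType) (n : nat) (eps tau : R) (V : finType) (e : rel V)
  (hn : (1 <= n)%N) (heps0 : 0 < eps) (heps1 : eps <= 1)
  (htau0 : 0 < tau) (htau1 : tau < 1)
  (esym : symmetric e) (eirr : irreflexive e)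
  (h1 : #|edges V e|%:R >= 4 * n%:R / (tau ^+ 2 * eps ^+ 4))
  (h2 : #|edges V e|%:R >= 16 * n%:R / ((1 - tau) ^+ 2 * eps ^+ 4))
  (h3 : (cG V e)%:R / (#|edges V e|%:R ^+ 2)
          <= (1 - tau) ^+ 2 * eps ^+ 2 / (16 * Num.sqrt (n%:R))) :
  is_uniformity_tester n e tau eps.
Proof.
have sqrt_n_gt0 : 0 < Num.sqrt (n%:R : R) by rewrite sqrtr_gt0 ltr0n.
have m_gt0 : 0 < (#|edges V e|%:R : R).
  by apply: lt_le_trans h1; rewrite divr_gt0 ?mulr_gt0 ?exprn_gt0 ?ltr0n.
rewrite ler_pdivrMr ?mulr_gt0 ?exprn_gt0 // in h1.
rewrite ler_pdivrMr ?mulr_gt0 ?exprn_gt0 ?subr_gt0 // in h2.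
rewrite ler_pdivrMr ?exprn_gt0 // mulrAC ler_pdivlMr ?mulr_gt0 // in h3.
split; first exact: uniform_accepted.
by move=> P P_distr far; apply: far_rejected.
Qed.
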